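(* Let $A$ be the $b\times v$ incidence matrix of a $(v,b,r,k,\lambda)$-BIBD with $k<v$, let $\theta\in(0,1)$, $\alpha_1=\theta/r$, $\alpha_2=(1-\theta)/(b-r)$, and $Q=\alpha_1A+\alpha_2(J_{b\times v}-A)$, and assume $Q$ has rank $v$. Let $\pi$ be the uniform distribution on the $v$ points, let $\rho=Q\pi$ be the induced distribution on the $b$ blocks, and let $D_\rho$ be the $b\times b$ diagonal matrix with $\rho_1,\dots,\rho_b$ on the diagonal. Then the estimator $$L=(Q^TD_\rho^{-1}Q)^{-1}Q^TD_\rho^{-1}$$ is equal to the Moore–Penrose inverse $(Q^TQ)^{-1}Q^T$ of $Q$.
   Context: A $(v,b,r,k,\lambda)$-BIBD is a set system with $v$ points and $b$ blocks, each block of size $k$, each point in exactly $r$ blocks, each pair of distinct points in exactly $\lambda$ blocks. $J_{b\times v}$ is the all-ones matrix. $Q$ is the transition probability matrix of the LDP protocol based on the BIBD. The estimator $(Q^TD_\rho^{-1}Q)^{-1}Q^TD_\rho^{-1}$ is the unbiased linear estimator (left inverse of $Q$) minimizing the risk $\mathsf{trace}(LD_\rho L^T)-\sum_j p_j^2$ among left inverses $L$ of $Q$. *)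

From mathcomp Require Import all_boot all_order all_algebra.
Set Implicit Arguments. Unset Strict Implicit. Unset Printing Implicit Defensive.
Import Order.TTheory GRing.Theory Num.Theory.
Local Open Scope ring_scope.

(* A (v,b,r,k,lambda)-BIBD given by its incidence relation:
   [inc i j] means point j lies in block i (blocks 'I_b, points 'I_v). *)
Definition is_BIBD (v b r k lam : nat) (inc : 'I_b -> 'I_v -> bool) : Prop :=
  [/\ (forall i : 'I_b, #|[set j | inc i j]| = k),
      (forall j : 'I_v, #|[set i | inc i j]| = r) &
      (forall j1 j2 : 'I_v, j1 != j2 -> #|[set i | inc i j1 && inc i j2]| = lam)].

Definition incidence_mx (R : nzRingType) (v b : nat) (inc : 'I_b -> 'I_v -> bool)
  : 'M[R]_(b, v) := \matrix_(i, j) (inc i j)%:R.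

Definition bibd_Q (R : fieldType) (v b r : nat) (theta : R) (A : 'M[R]_(b, v))
  : 'M[R]_(b, v) :=
  (theta / r%:R) *: A + ((1 - theta) / (b%:R - r%:R)) *: (const_mx 1 - A).

Definition unif_pi (R : fieldType) (v : nat) : 'cV[R]_v := const_mx (v%:R^-1).

From mathcomp Require Import all_boot all_order all_algebra.
Import Order.TTheory GRing.Theory Num.Theory.
Local Open Scope ring_scope.

(* Every block has k points, so Q has constant row sums and rho = Q pi is a
   constant vector c; hence D = c I and the factors c^-1 and c in
   (Q^T D^-1 Q)^-1 Q^T D^-1 cancel.  It remains that c != 0, because the
   weight (1 - theta)/(b - r) of the v - k > 0 points outside a block is
   positive (k < v forces r < b), and that Q^T Q is invertible, which over an
   ordered field follows from Q having full column rank. *)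

Lemma mulmx_tr_self_eq0 (R : realDomainType) (n : nat) (x : 'rV[R]_n) :
  x *m x^T = 0 -> x = 0.
Proof.
move=> /(congr1 (fun M : 'M[R]_1 => M 0 0)); rewrite !mxE => sum_sq0.
have sq_ge0 j : true -> 0 <= x 0 j * x^T j 0 by rewrite mxE -expr2 sqr_ge0.
apply/rowP => j; rewrite mxE.
have /eqP := psumr_eq0P sq_ge0 sum_sq0 (i := j) isT.
by rewrite mxE mulf_eq0 orbb => /eqP.
Qed.

Lemma tr_mulmx_self_unit (R : realFieldType) (b v : nat) (Q : 'M[R]_(b, v)) :
  \rank Q = v -> Q^T *m Q \in unitmx.
Proof.
move=> rkQ; rewrite -row_free_unit; apply: inj_row_free => x xQtQ0.
have freeQt : row_free Q^T by rewrite -row_leq_rank mxrank_tr rkQ.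
apply: (row_free_inj freeQt); rewrite mul0mx; apply: mulmx_tr_self_eq0.
by rewrite trmx_mul trmxK !mulmxA -(mulmxA x) xQtQ0 mul0mx.
Qed.

Lemma weighted_lsq_scalar (R : fieldType) (b v : nat) (Q : 'M[R]_(b, v))
    (c : R) :
  c != 0 -> Q^T *m Q \in unitmx ->
  invmx (Q^T *m invmx c%:M *m Q) *m Q^T *m invmx c%:M
    = invmx (Q^T *m Q) *m Q^T.
Proof.
move=> c_neq0 QtQ_unit.
have cV_unit : c^-1 \is a GRing.unit by rewrite unitfE invr_eq0.
rewrite invmx_scalar [Q^T *m _]mul_mx_scalar -scalemxAl invmxZ ?unitmxZ // invrK.
by rewrite mul_mx_scalar -!scalemxAl scalerA mulVf // scale1r.
Qed.

Lemma mulmx_const_row_sums {R : pzSemiRingType} {m n p : nat}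
    {M : 'M[R]_(m, n)} {s : R} (a : R) :
  (forall i, \sum_j M i j = s) ->
  M *m (const_mx a : 'M_(n, p)) = const_mx (s * a).
Proof.
move=> Msum; apply/matrixP => i l; rewrite !mxE -(Msum i) mulr_suml.
by apply: eq_bigr => j _; rewrite mxE.
Qed.

Lemma incidence_mx_row_sum (R : nzRingType) {v b : nat}
    (inc : 'I_b -> 'I_v -> bool) (i : 'I_b) :
  \sum_j incidence_mx R inc i j = #|[set j | inc i j]|%:R.
Proof.
rewrite cardsE -sumr_const [RHS]big_mkcond /=.
by apply: eq_bigr => j _; rewrite mxE unfold_in; case: (inc i j).
Qed.

Lemma bibd_Q_row_sum {R : fieldType} {v b : nat} (r : nat) (theta : R)
    {A : 'M[R]_(b, v)} {i : 'I_b} {s : R} :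
  \sum_j A i j = s ->
  \sum_j bibd_Q r theta A i j
    = theta / r%:R * s + (1 - theta) / (b%:R - r%:R) * (v%:R - s).
Proof.
have -> : v%:R = \sum_(j < v) (1 : R) by rewrite sumr_const card_ord.
move=> Asum; rewrite -Asum -sumrB !mulr_sumr.
by rewrite -big_split; apply: eq_bigr => j _; rewrite !mxE.
Qed.

Lemma bibd_r_lt_b {v b r k lam : nat} {inc : 'I_b -> 'I_v -> bool} (i0 : 'I_b) :
  is_BIBD r k lam inc -> (k < v)%N -> (r < b)%N.
Proof.
case=> blk_size pt_repl _ k_lt_v.
have [j j_notin_i0] : exists j, ~~ inc i0 j.
  apply/existsP; rewrite -negb_forall; apply: contraTN k_lt_v => /forallP all_in.
  rewrite -(blk_size i0) -[X in (_ < X)%N]card_ord -cardsT -leqNgt.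
  by apply/subset_leq_card/subsetP => j _; rewrite inE all_in.
rewrite -(pt_repl j) -[X in (_ < X)%N]card_ord -cardsT; apply: proper_card.
by rewrite properT; apply/negP => /eqP/setP/(_ i0); rewrite !inE (negbTE j_notin_i0).
Qed.

Theorem mainTheorem5 (R : realFieldType) (v b r k lam : nat)
    (inc : 'I_b -> 'I_v -> bool) (theta : R) :
  is_BIBD r k lam inc ->
  (k < v)%N ->
  0 < theta < 1 ->
  let A : 'M[R]_(b, v) := incidence_mx R inc in
  let Q := bibd_Q r theta A in
  \rank Q = v ->
  let rho : 'cV[R]_b := Q *m unif_pi R v in
  let D : 'M[R]_b := diag_mx rho^T in
  invmx (Q^T *m invmx D *m Q) *m Q^T *m invmx D = invmx (Q^T *m Q) *m Q^T.
Proof.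
move=> bibd k_lt_v /andP[theta_gt0 theta_lt1] A Q rkQ rho D.
have v_gt0 : (0 < v)%N by apply: leq_ltn_trans k_lt_v.
have b_gt0 : (0 < b)%N by rewrite (leq_trans v_gt0) // -{1}rkQ rank_leq_row.
have r_lt_b := bibd_r_lt_b (Ordinal b_gt0) bibd k_lt_v.
set s := theta / r%:R * k%:R + (1 - theta) / (b%:R - r%:R) * (v%:R - k%:R).
have Qsum i : \sum_j Q i j = s.
  case: bibd => blk_size _ _.
  by rewrite (bibd_Q_row_sum r theta (incidence_mx_row_sum R inc i)) blk_size.
have s_gt0 : 0 < s.
  apply: ltr_wpDl; first by rewrite mulr_ge0 // divr_ge0 // ltW.
  by rewrite !mulr_gt0 ?invr_gt0 ?subr_gt0 ?ltr_nat.
have DE : D = (s * v%:R^-1)%:M.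
  by rewrite /D /rho /unif_pi (mulmx_const_row_sums _ Qsum) trmx_const diag_const_mx.
rewrite DE weighted_lsq_scalar ?tr_mulmx_self_unit //.
by rewrite mulf_neq0 ?invr_eq0 ?pnatr_eq0 -?lt0n ?gt_eqF.
Qed.
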